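(* Let $A=(A_1,\dots,A_d)$ have a palindromic distribution $p$ on $\{0,1\}^d$ with $p(a)>0$ for all $a$. If the largest clique of the concentration graph of $p$ has size three, then $p$ is a palindromic Ising model, i.e. all log-linear interactions $\lambda_b=2^{-d}\sum_{a}(-1)^{a\cdot b}\log p(a)$ with $|b|\ge 3$ vanish.
   Context: Palindromic: $p(a)=p(\sim a)$ for all $a$, where $\sim a$ is the complement of the binary vector $a$. For $b\in\{0,1\}^d$, $|b|=\sum_v b_v$ and $a\cdot b=\sum_v a_vb_v$. The concentration graph of $p$ is the undirected graph on nodes $\{1,\dots,d\}$ in which the edge $\{i,j\}$ is missing if and only if $A_i\perp\!\!\!\perp A_j\mid (A_v)_{v\ne i,j}$ (equivalently, the two-factor log-linear interaction of $i,j$ and all higher interactions containing $i,j$ vanish). A clique is a maximal complete subset of nodes. An Ising model is a positive distribution on $\{0,1\}^d$ with no log-linear interaction of order higher than two; it is a palindromic Ising model if it is moreover palindromic (equivalently, has in addition uniform margins). *)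

From mathcomp Require Import all_boot all_order all_algebra.
From mathcomp Require Import reals exp.
Set Implicit Arguments. Unset Strict Implicit. Unset Printing Implicit Defensive.
Import Order.TTheory GRing.Theory Num.Theory.
Local Open Scope ring_scope.

(* binary vectors a in {0,1}^d, coordinates indexed by 'I_d (nodes 1..d) *)
Definition bvec (d : nat) := {ffun 'I_d -> bool}.

Section Defs.
Variables (R : realType) (d : nat).
Implicit Types (p : bvec d -> R) (a b : bvec d).

Definition bcompl a : bvec d := [ffun v => ~~ a v].
Definition bsize b : nat := (\sum_(v < d) (b v : nat))%N.
Definition bdot a b : nat := (\sum_(v < d) ((a v && b v) : nat))%N.

Definition positive_distr p := (forall a, 0 < p a) /\ \sum_(a : bvec d) p a = 1.

Definition palindromic p := forall a, p a = p (bcompl a).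

Definition bset a (i : 'I_d) (x : bool) : bvec d :=
  [ffun v => if v == i then x else a v].

(* A_i _||_ A_j | (A_v)_{v <> i,j}: for every configuration a,
   p(a_i,a_j,c) p(c) = p(a_i,c) p(a_j,c), with c = (a_v)_{v<>i,j} and
   p(c), p(a_i,c), p(a_j,c) the corresponding marginals. *)
Definition cond_indep p (i j : 'I_d) :=
  forall a,
    p a * (\sum_(x : bool) \sum_(y : bool) p (bset (bset a i x) j y))
    = (\sum_(y : bool) p (bset a j y)) * (\sum_(x : bool) p (bset a i x)).

Definition conc_edge p (i j : 'I_d) := i != j /\ ~ cond_indep p i j.

Definition complete p (S : {set 'I_d}) :=
  forall i j, i \in S -> j \in S -> i != j -> conc_edge p i j.

Definition clique p (S : {set 'I_d}) :=
  complete p S /\ forall T : {set 'I_d}, S \subset T -> complete p T -> T = S.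

Definition interaction p b : R :=
  (2 ^+ d)^-1 * \sum_(a : bvec d) (-1) ^+ (bdot a b) * ln (p a).

End Defs.

(* An odd-order interaction of a palindromic distribution vanishes because
   complementing all coordinates reverses the sign of its Walsh character.
   For even |b| >= 4, the support of b cannot be complete in the concentration
   graph (it would lie in a clique with four or more nodes), so it contains
   i <> j with A_i _||_ A_j given the rest.  Then log p(a) splits as
   log p(a_{-j}) + log p(a_{-i}) - log p(a_{-ij}) (marginals), and each term
   is constant in a coordinate of the support of b, hence is killed by the
   Walsh character of b. *)
From mathcomp Require Import all_boot all_order all_algebra.
From mathcomp Require Import reals exp.
Set Implicit Arguments. Unset Strict Implicit. Unset Printing Implicit Defensive.
Import Order.TTheory GRing.Theory Num.Theory.
Local Open Scope ring_scope.

Lemma sum_eq0_sign_reversing (R : numDomainType) (T : finType) (g : T -> T)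
    (F : T -> R) :
  involutive g -> (forall t, F (g t) = - F t) -> \sum_t F t = 0.
Proof.
move=> gK FgN; apply/eqP; rewrite -eqNr -sumrN.
rewrite (reindex_inj (inv_inj gK)) /=; apply/eqP.
by apply: eq_bigr => t _; rewrite FgN opprK.
Qed.

Lemma signr_odd_negb {R : pzRingType} (m n : nat) :
  odd m = ~~ odd n -> (-1) ^+ m = - (-1) ^+ n :> R.
Proof.
move=> mn; rewrite -signr_odd mn -[in RHS]signr_odd.
by case: (odd n); rewrite /= ?expr0 ?expr1 ?opprK.
Qed.

Section BinaryVectors.
Variable d : nat.
Implicit Types (a b : bvec d) (i j : 'I_d).

Definition bflip a j : bvec d := bset a j (~~ a j).

Definition bsupp b : {set 'I_d} := [set v | b v].

Lemma bset_bset a j x y : bset (bset a j x) j y = bset a j y.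
Proof. by apply/ffunP => v; rewrite !ffunE; case: (v == j). Qed.

Lemma bsetC a i j x y : i != j ->
  bset (bset a i x) j y = bset (bset a j y) i x.
Proof.
move=> ij; apply/ffunP => v; rewrite !ffunE.
by case: (eqVneq v j) => [->|//]; rewrite eq_sym (negbTE ij).
Qed.

Lemma bset_bflip a i j x : i != j -> bset (bflip a j) i x = bflip (bset a i x) j.
Proof.
move=> ij; apply/ffunP => v; rewrite !ffunE.
by case: (eqVneq v i) => [->|]; rewrite ?(negbTE ij) // (eq_sym j i) (negbTE ij).
Qed.

Lemma bflipK j : involutive (bflip^~ j).
Proof.
move=> a; rewrite /bflip bset_bset ffunE eqxx negbK.
by apply/ffunP => v; rewrite ffunE; case: eqP => [->|].
Qed.

Lemma bcomplK : involutive (@bcompl d).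
Proof. by move=> a; apply/ffunP => v; rewrite !ffunE negbK. Qed.

Lemma card_bsupp b : #|bsupp b| = bsize b.
Proof.
rewrite -sum1_card big_mkcond /=; apply: eq_bigr => v _.
by rewrite inE; case: (b v).
Qed.

Lemma odd_bdot_bflip a b j : b j -> odd (bdot (bflip a j) b) = ~~ odd (bdot a b).
Proof.
move=> bj; rewrite /bdot (bigD1 j) //= [in RHS](bigD1 j) //= !oddD.
have -> : (\sum_(v < d | v != j) (bflip a j v && b v) =
           \sum_(v < d | v != j) (a v && b v))%N.
  by apply: eq_bigr => v vj; rewrite ffunE (negbTE vj).
by rewrite /bflip ffunE eqxx bj; case: (a j); rewrite /= ?negbK.
Qed.

Lemma odd_bdot_bcompl a b : odd (bsize b) ->
  odd (bdot (bcompl a) b) = ~~ odd (bdot a b).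
Proof.
move=> oddb; have : (bdot (bcompl a) b + bdot a b)%N = bsize b.
  rewrite /bdot /bsize -big_split /=; apply: eq_bigr => v _.
  by rewrite ffunE; case: (a v); case: (b v).
by move/(congr1 odd); rewrite oddD oddb; case: (odd _); case: (odd _).
Qed.

End BinaryVectors.

Section Walsh.
Variables (R : realType) (d : nat).
Implicit Types (f p : bvec d -> R) (a b : bvec d) (i j : 'I_d).

Definition walsh b f : R := \sum_a (-1) ^+ bdot a b * f a.

Lemma interactionE p b :
  interaction p b = (2 ^+ d)^-1 * walsh b (fun a => ln (p a)).
Proof. by []. Qed.

Lemma eq_walsh b f g : f =1 g -> walsh b f = walsh b g.
Proof. by move=> fg; apply: eq_bigr => a _; rewrite fg. Qed.

Lemma walshDB b f g h :
  walsh b (fun a => f a + g a - h a) = walsh b f + walsh b g - walsh b h.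
Proof.
rewrite /walsh -big_split -sumrB; apply: eq_bigr => a _.
by rewrite mulrBr mulrDr.
Qed.

Lemma walsh_bflip_eq0 b f j : b j -> (forall a, f (bflip a j) = f a) ->
  walsh b f = 0.
Proof.
move=> bj fj; apply: (sum_eq0_sign_reversing (bflipK j)) => a.
by rewrite fj (signr_odd_negb (odd_bdot_bflip _ bj)) mulNr.
Qed.

Lemma walsh_bcompl_eq0 b f : odd (bsize b) -> (forall a, f (bcompl a) = f a) ->
  walsh b f = 0.
Proof.
move=> oddb fC; apply: (sum_eq0_sign_reversing (@bcomplK d)) => a.
by rewrite fC (signr_odd_negb (odd_bdot_bcompl _ oddb)) mulNr.
Qed.

Lemma interaction_palindromic_odd p b : palindromic p -> odd (bsize b) ->
  interaction p b = 0.
Proof.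
move=> pal oddb; rewrite interactionE walsh_bcompl_eq0 ?mulr0 //.
by move=> a; rewrite -pal.
Qed.

Definition marg f j a : R := \sum_(y : bool) f (bset a j y).

Lemma marg_gt0 f j : (forall a, 0 < f a) -> forall a, 0 < marg f j a.
Proof. by move=> fpos a; rewrite /marg big_bool addr_gt0. Qed.

Lemma marg_bflip f j a : marg f j (bflip a j) = marg f j a.
Proof. by apply: eq_bigr => y _; rewrite /bflip bset_bset. Qed.

Lemma marg2_bflip f i j a : i != j ->
  marg (marg f j) i (bflip a j) = marg (marg f j) i a.
Proof. by move=> ij; apply: eq_bigr => x _; rewrite bset_bflip // marg_bflip. Qed.

Lemma ln_cond_indep p i j a : (forall a, 0 < p a) -> cond_indep p i j ->
  ln (p a) = ln (marg p j a) + ln (marg p i a) - ln (marg (marg p j) i a).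
Proof.
move=> ppos indep.
have : p a * marg (marg p j) i a = marg p j a * marg p i a := indep a.
have [pj pi] := (marg_gt0 j ppos, marg_gt0 i ppos).
move/(congr1 (@ln R)); rewrite !lnM ?posrE ?(marg_gt0 i pj) // => <-.
by rewrite addrK.
Qed.

Lemma interaction_cond_indep p b i j : (forall a, 0 < p a) -> i != j ->
  b i -> b j -> cond_indep p i j -> interaction p b = 0.
Proof.
move=> ppos ij bi bj indep.
rewrite interactionE (eq_walsh _ (fun a => ln_cond_indep a ppos indep)).
rewrite walshDB.
have -> : walsh b (fun a => ln (marg p j a)) = 0.
  by apply: (walsh_bflip_eq0 bj) => a; rewrite marg_bflip.
have -> : walsh b (fun a => ln (marg p i a)) = 0.
  by apply: (walsh_bflip_eq0 bi) => a; rewrite marg_bflip.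
have -> : walsh b (fun a => ln (marg (marg p j) i a)) = 0.
  by apply: (walsh_bflip_eq0 bj) => a; rewrite marg2_bflip.
by rewrite !add0r oppr0 mulr0.
Qed.

End Walsh.

Section ConcentrationGraph.
Variables (R : realType) (d : nat) (p : bvec d -> R).
Implicit Types (S : {set 'I_d}) (i j : 'I_d).

Definition cond_indepb i j :=
  [forall a, p a * marg (marg p j) i a == marg p j a * marg p i a].

Lemma cond_indepP i j : reflect (cond_indep p i j) (cond_indepb i j).
Proof. by apply: (iffP forallP) => indep a; apply/eqP/indep. Qed.

Definition completeb S :=
  [forall i in S, forall j in S, (i != j) ==> ~~ cond_indepb i j].

Lemma completeP S : reflect (complete p S) (completeb S).
Proof.
apply: (iffP forall_inP) => [compS i j iS jS ij | compS i iS].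
  split=> //; apply/cond_indepP.
  by move/forall_inP: (compS i iS) => /(_ j jS)/implyP; apply.
apply/forall_inP => j jS; apply/implyP => ij; apply/cond_indepP.
by case: (compS i j iS jS ij).
Qed.

Lemma complete_sub_clique S : complete p S -> exists2 U, clique p U & S \subset U.
Proof.
move/completeP/(maxset_exists (P := completeb)).
move=> [U /maxsetP[/completeP compU maxU] SU].
by exists U => //; split=> // T UT /completeP compT; apply: maxU.
Qed.

Lemma not_complete_cond_indep S : ~ complete p S ->
  exists i j, [/\ i \in S, j \in S, i != j & cond_indep p i j].
Proof.
move/completeP/forall_inPn => [i iS /forall_inPn [j jS]].
by rewrite negb_imply negbK => /andP[ij /cond_indepP]; exists i, j.
Qed.

End ConcentrationGraph.

Theorem proposition5p1 (R : realType) (d : nat) (p : bvec d -> R) :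
  positive_distr p ->
  palindromic p ->
  (exists S : {set 'I_d}, clique p S /\ #|S| = 3%N) ->
  (forall S : {set 'I_d}, clique p S -> (#|S| <= 3)%N) ->
  forall b : bvec d, (3 <= bsize b)%N -> interaction p b = 0.
Proof.
move=> [ppos _] pal _ clique_le3 b b_ge3.
have [oddb|evenb] := boolP (odd (bsize b)).
  exact: interaction_palindromic_odd.
have /not_complete_cond_indep [i [j [bi bj ij indep]]] : ~ complete p (bsupp b).
  move=> /complete_sub_clique [U /clique_le3 U_le3 /subset_leq_card].
  rewrite card_bsupp => b_leU; move: evenb.
  suff -> : bsize b = 3%N by [].
  by apply/eqP; rewrite eqn_leq b_ge3 andbT (leq_trans b_leU U_le3).
rewrite !inE in bi bj.
exact: interaction_cond_indep ppos ij bi bj indep.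
Qed.
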